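(* Let $U\subseteq X$ be open and $A\subseteq U$ closed. Then for every $x\in X$, $$\varepsilon_x^{A\cup (X\setminus U)}(U)\ \ge\ \|\varepsilon_x^A\|-\sup_{z\in X\setminus U}\|\varepsilon_z^A\|.$$
   Context: $(X,\rho)$ is a separable metric space; $\mathcal M(X)$ the finite Borel measures (extended to universally measurable sets), $\|\mu\|:=\mu(X)$, $\varepsilon_x$ the Dirac measure. For every open $U\subseteq X$ and $x\in X$ a measure $\mu_x^U\in\mathcal M(X)$ is given such that for all open $U,V$ and all $x$: $\mu_x^U(U)=0$, $\|\mu_x^U\|\le1$, $\mu_x^U=\varepsilon_x$ if $x\notin U$; $y\mapsto\mu_y^U(E)$ is universally measurable for every Borel $E$; and $\mu_x^U=\int\mu_y^U\,d\mu_x^V(y)$ whenever $V\subseteq U$. For closed $A\subseteq X$, $\varepsilon_x^A:=\mu_x^{X\setminus A}$. *)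

From HB Require Import structures.
From mathcomp Require Import all_boot all_order all_algebra.
From mathcomp Require Import all_classical all_reals all_analysis measurable_realfun.

Set Implicit Arguments.
Unset Strict Implicit.
Unset Printing Implicit Defensive.

Import Order.TTheory GRing.Theory Num.Theory.
Local Open Scope classical_set_scope.
Local Open Scope ring_scope.

(* A metric space with a distinguished point (needed by MathComp-Analysis to
   build measurable types; harmless since the theorem quantifies over x : X). *)
#[short(type="pmetricType")]
HB.structure Definition PointedMetric (K : numDomainType) :=
  { M of Pointed M & Metric K M }.

Definition Borel (R : realType) (X : pmetricType R) :=
  g_sigma_algebraType (@open X).

Definition separable_space (R : realType) (X : pmetricType R) : Prop :=
  exists D : set X, countable D /\ closure D = setT.

Notation FinMeas R X := {finite_measure set (Borel X) -> \bar R}.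

Definition univ_measurable_set (R : realType) (X : pmetricType R)
    (A : set X) : Prop :=
  forall nu : FinMeas R X, completed_algebra_gen nu (A : set (Borel X)).

Definition univ_measurable_fun (R : realType) (X : pmetricType R)
    (f : X -> \bar R) : Prop :=
  forall B : set \bar R, measurable B -> univ_measurable_set (f @^-1` B).

(* The standing hypotheses on the family U, x |-> mu_x^U  (here mu U x). *)
Definition balayage_family (R : realType) (X : pmetricType R)
    (mu : set X -> X -> FinMeas R X) : Prop :=
  [/\ (forall U x, open U -> mu U x U = 0%E),
      (forall U x, open U -> (mu U x setT <= 1)%E),
      (forall U x, open U -> ~ U x ->
         forall E : set (Borel X), measurable E -> mu U x E = \d_(x : Borel X) E),
      (forall U (E : set (Borel X)), open U -> measurable E ->
         univ_measurable_fun (fun y => mu U y E)) &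
      (forall U V x, open U -> open V -> V `<=` U ->
         forall E : set (Borel X), measurable E ->
           mu U x E =
           (\int[@completed_measure_extension _ _ _ (mu V x)]_y mu U y E)%E)].

Definition eps (R : realType) (X : pmetricType R)
    (mu : set X -> X -> FinMeas R X) (A : set X) (x : X) : FinMeas R X :=
  mu (~` A) x.

Definition mass (R : realType) (X : pmetricType R) (nu : FinMeas R X) : \bar R :=
  nu setT.

From HB Require Import structures.
From mathcomp Require Import all_boot all_order all_algebra.
From mathcomp Require Import all_classical all_reals all_analysis measurable_realfun.

(* Put [B := A ∪ (X \ U)].  Since [X \ B ⊆ X \ A], sweeping onto [A] factors
   through sweeping onto [B]: [‖ε_x^A‖ = ∫ ‖ε_y^A‖ dε_x^B(y)].  The integrand is
   at most [1] on [U] and at most [s := sup_{z ∉ U} ‖ε_z^A‖] off [U], so the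
   integral is at most [ε_x^B(U) + s ‖ε_x^B‖ ≤ ε_x^B(U) + s]. *)

Local Open Scope classical_set_scope.
Local Open Scope ring_scope.

Import Order.TTheory GRing.Theory Num.Theory.

Lemma completed_algebra_gen_caratheodory d (T : semiRingOfSetsType d)
    (R : realType) (mu : {measure set T -> \bar R}) (A : set T) :
  completed_algebra_gen mu A -> (mu^*)%mu.-cara.-measurable A.
Proof.
move=> [B mB [N [M [mM M0 NM]]] <-].
apply: measurableU; first exact: caratheodory_measurable_mu_ext.
apply: measure_is_complete_caratheodory; exists M; split => //.
- exact: caratheodory_measurable_mu_ext.
- by rewrite /= measurable_mu_extE.
Qed.

Lemma univ_measurable_fun_completed (R : realType) (X : pmetricType R)
    (nu : FinMeas R X) (f : X -> \bar R) :
  univ_measurable_fun f ->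
  measurable_fun [set: caratheodory_type (nu^*)%mu] f.
Proof.
move=> uf _ B mB; rewrite setTI.
exact/completed_algebra_gen_caratheodory/uf.
Qed.

Section sup_fine_image.
Local Open Scope ereal_scope.
Context {R : realType} {T : Type} (D : set T) (f : T -> \bar R) (M : R).
Hypothesis f_bounded : forall z, D z -> 0 <= f z <= M%:E.

Let S := [set fine (f z) | z in D].

Let S_ubound : has_ubound S.
Proof.
exists M => _ [z Dz <-]; have /andP[f0 fM] := f_bounded _ Dz.
by rewrite -lee_fin fineK// ge0_fin_numE// (le_lt_trans fM) ?ltry.
Qed.

Lemma sup_fine_image_ge0 : (0 <= sup S)%R.
Proof.
have [[z Dz]|nD] := pselect (exists z, D z).
  apply: (@le_trans _ _ (fine (f z))); last by apply: ub_le_sup => //; exists z.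
  by rewrite fine_ge0//; case/andP: (f_bounded _ Dz).
suff -> : S = set0 by rewrite sup0.
by apply/seteqP; split => // r [z Dz _]; apply: nD; exists z.
Qed.

Lemma le_sup_fine_image z : D z -> f z <= (sup S)%:E.
Proof.
move=> Dz; have /andP[f0 fM] := f_bounded _ Dz.
rewrite -(@fineK _ (f z)) ?ge0_fin_numE ?(le_lt_trans fM) ?ltry// lee_fin.
by apply: ub_le_sup => //; exists z.
Qed.

End sup_fine_image.

Lemma integral_le_indic_add_cst d (T : measurableType d) (R : realType)
    (m : {measure set T -> \bar R}) (U : set T) (s : R) (f : T -> \bar R) :
  measurable U -> 0 <= s -> (m setT <= 1)%E ->
  measurable_fun setT f -> (forall y, 0 <= f y)%E ->
  (forall y, f y <= (\1_U y)%:E + s%:E)%E ->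
  (\int[m]_y f y <= m U + s%:E)%E.
Proof.
move=> mU s0 m1 mf f0 fle.
have mind : measurable_fun setT (fun y => (\1_U y)%:E : \bar R).
  by apply/measurable_EFinP; exact: measurable_indic.
apply: (le_trans (ge0_le_integral _ _ _ _ _ (fun y _ => fle y))) => //.
  by apply: emeasurable_funD => //; exact: measurable_cst.
rewrite ge0_integralD// integral_indic// setIT integral_cst// muleC.
apply: leeD2l; apply: gee_pMl; rewrite ?lee_fin//.
by rewrite ge0_fin_numE// (le_lt_trans m1) ?ltry.
Qed.

Section balayage.
Local Open Scope ereal_scope.
Context {R : realType} {X : pmetricType R} {mu : set X -> X -> FinMeas R X}.
Hypothesis mu_balayage : balayage_family mu.

Lemma mass_eps_le1 (A : set X) x : closed A -> mass (eps mu A x) <= 1.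
Proof. by case: mu_balayage => _ mu_le1 _ _ _ cA; apply: mu_le1; rewrite openC. Qed.

Lemma mass_eps_bounded (A : set X) x : closed A -> 0 <= mass (eps mu A x) <= 1%:E.
Proof. by move=> cA; rewrite measure_ge0 mass_eps_le1. Qed.

Lemma measurable_mass_eps (A : set X) (nu : FinMeas R X) : closed A ->
  measurable_fun [set: caratheodory_type (nu^*)%mu] (fun y => mass (eps mu A y)).
Proof.
case: mu_balayage => _ _ _ mu_univ _ cA.
by apply: univ_measurable_fun_completed; apply: mu_univ; rewrite ?openC.
Qed.

Lemma mass_eps_sweep (A B : set X) x : closed A -> closed B -> A `<=` B ->
  mass (eps mu A x) =
  \int[@completed_measure_extension _ _ _ (eps mu B x)]_y mass (eps mu A y).
Proof.
case: mu_balayage => _ _ _ _ mu_iter cA cB AB.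
by apply: mu_iter; rewrite ?openC//; apply: subsetC.
Qed.

Lemma mass_eps_le_indic_sup (A U : set X) y : closed A ->
  mass (eps mu A y) <=
  (\1_U y)%:E + (sup [set fine (mass (eps mu A z)) | z in ~` U])%:E.
Proof.
move=> cA; have mass_bounded z : (~` U) z -> 0 <= mass (eps mu A z) <= 1%:E.
  by move=> _; exact: mass_eps_bounded.
have [Uy|nUy] := pselect (U y).
  rewrite indicE mem_set// (le_trans (mass_eps_le1 A y cA))// leeDl// lee_fin.
  exact: sup_fine_image_ge0 mass_bounded.
by rewrite indicE memNset// add0e; apply: le_sup_fine_image mass_bounded _ nUy.
Qed.

End balayage.

Theorem lemma4p8 (R : realType) (X : pmetricType R)
    (mu : set X -> X -> FinMeas R X) :
  separable_space X ->
  balayage_family mu ->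
  forall (U A : set X), open U -> closed A -> A `<=` U ->
  forall x : X,
    (eps mu (A `|` ~` U) x U >=
     mass (eps mu A x) -
     (sup [set fine (mass (eps mu A z)) | z in ~` U])%:E)%E.
Proof.
move=> _ mu_balayage U A oU cA _ x.
have cB : closed (A `|` ~` U) by apply: closedU; rewrite ?closedC.
have mU : measurable (U : set (Borel X)) by apply: sub_sigma_algebra.
rewrite leeBlDr// (mass_eps_sweep mu_balayage _ _ x cA cB (@subsetUl _ A _)).
rewrite -(measurable_mu_extE (eps mu (A `|` ~` U) x) mU).
apply: integral_le_indic_add_cst.
- exact: caratheodory_measurable_mu_ext.
- by apply: (@sup_fine_image_ge0 _ _ _ _ 1) => z _; exact: mass_eps_bounded.
- have := mass_eps_le1 mu_balayage _ x cB.
  by rewrite /mass -(measurable_mu_extE _ measurableT).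
- exact: measurable_mass_eps.
- by move=> y; exact: measure_ge0.
- by move=> y; exact: mass_eps_le_indic_sup.
Qed.
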